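(* Let $A$ be a $p$-Zariskian ring (not necessarily Noetherian) with Jacobson radical $\mathrm{Jac}(A)$. If $A$ has a $\delta$-structure $\delta$, then $\delta(x)\in\mathrm{Jac}(A)$ for every $x\in\mathrm{Jac}(A)^2$. In particular, no distinguished element of $A$ belongs to $\mathrm{Jac}(A)^2$. If the $\delta$-ring $A$ is local with maximal ideal $\mathfrak{m}$, then $A$ is unramified, i.e. $p\in\mathfrak{m}\setminus\mathfrak{m}^2$.
   Context: All rings are commutative $\mathbb{Z}_{(p)}$-algebras. A ring is $p$-Zariskian if $p\in\mathrm{Jac}(A)$. A $\delta$-structure is a map $\delta:A\to A$ with $\delta(0)=\delta(1)=0$, $\delta(a+b)=\delta(a)+\delta(b)+\frac{a^p+b^p-(a+b)^p}{p}$, $\delta(ab)=a^p\delta(b)+b^p\delta(a)+p\delta(a)\delta(b)$. An element $d$ is distinguished if $\delta(d)$ is a unit. *)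

From mathcomp Require Import all_boot all_algebra.
Set Implicit Arguments. Unset Strict Implicit. Unset Printing Implicit Defensive.
Import GRing.Theory.
Local Open Scope ring_scope.

Definition is_ideal (A : comRingType) (I : A -> Prop) : Prop :=
  [/\ I 0, (forall x y, I x -> I y -> I (x + y)) & (forall a x, I x -> I (a * x))].

Definition is_maximal_ideal (A : comRingType) (I : A -> Prop) : Prop :=
  [/\ is_ideal I, ~ I 1 &
      forall J : A -> Prop, is_ideal J -> (forall x, I x -> J x) ->
        (forall x, J x) \/ (forall x, J x <-> I x)].

Definition jacobson (A : comRingType) : A -> Prop :=
  fun x => forall M : A -> Prop, is_maximal_ideal M -> M x.

Definition ideal_sq (A : comRingType) (I : A -> Prop) : A -> Prop :=
  fun x => exists (n : nat) (a b : 'I_n -> A),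
    (forall i, I (a i) /\ I (b i)) /\ x = \sum_(i < n) a i * b i.

Definition Zp_algebra (p : nat) (A : comUnitRingType) : Prop :=
  forall n : nat, coprime n p -> (n%:R : A) \is a GRing.unit.

Definition p_zariskian (p : nat) (A : comRingType) : Prop :=
  jacobson (p%:R : A).

(* delta-structure; (a^p + b^p - (a+b)^p)/p is the integral polynomial
   - sum_{0<i<p} (C(p,i)/p) a^i b^(p-i). *)
Definition delta_structure (p : nat) (A : comRingType) (d : A -> A) : Prop :=
  [/\ d 0 = 0, d 1 = 0,
      (forall a b, d (a + b) = d a + d b
         - \sum_(1 <= i < p) ('C(p, i) %/ p)%:R * a ^+ i * b ^+ (p - i)) &
      (forall a b, d (a * b) = a ^+ p * d b + b ^+ p * d a + p%:R * d a * d b)].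

Definition distinguished (A : comUnitRingType) (d : A -> A) (x : A) : Prop :=
  d x \is a GRing.unit.

Definition local_with_max (A : comRingType) (m : A -> Prop) : Prop :=
  is_maximal_ideal m /\
  forall M : A -> Prop, is_maximal_ideal M -> forall x, M x <-> m x.

From mathcomp Require Import all_boot all_algebra.
From mathcomp Require Import boolp classical_sets.
From mathcomp Require Import zify.
Set Implicit Arguments. Unset Strict Implicit. Unset Printing Implicit Defensive.
Import GRing.Theory.
Local Open Scope ring_scope.

(* The product rule δ(ab) = a^p δ(b) + b^p δ(a) + p δ(a)δ(b) and the sum rule
   δ(a+b) ≡ δ(a) + δ(b) modulo a show that δ maps I^2 into I for every ideal I
   containing p.  For I = Jac(A) this is the first claim, and a unit cannot lie
   in Jac(A).  For I = m, if p were in m^2 then δ(p) = 1 - p^(p-1) would lie in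
   m, and so would 1. *)

Section Ideals.
Variables (A : comNzRingType) (I : A -> Prop).
Hypothesis I_ideal : is_ideal I.

Lemma ideal0 : I 0.
Proof. by case: I_ideal. Qed.

Lemma idealD x y : I x -> I y -> I (x + y).
Proof. by case: I_ideal => _ + _; apply. Qed.

Lemma idealMl a x : I x -> I (a * x).
Proof. by case: I_ideal => _ _; apply. Qed.

Lemma idealMr a x : I x -> I (x * a).
Proof. by rewrite mulrC; apply: idealMl. Qed.

Lemma idealN x : I x -> I (- x).
Proof. by rewrite -mulN1r; apply: idealMl. Qed.

Lemma idealX x n : I x -> (0 < n)%N -> I (x ^+ n).
Proof. by case: n => // n Ix _; rewrite exprS; apply: idealMr. Qed.

Lemma ideal_sum (J : Type) (r : seq J) (P : pred J) (F : J -> A) :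
  (forall j, P j -> I (F j)) -> I (\sum_(j <- r | P j) F j).
Proof. by move=> IF; apply: big_ind => //; [apply: ideal0 | apply: idealD]. Qed.

End Ideals.

Lemma ideal1_unit (A : comUnitRingType) (I : A -> Prop) (u : A) :
  is_ideal I -> I u -> u \is a GRing.unit -> I 1.
Proof. by move=> I_ideal Iu u_unit; rewrite -(mulVr u_unit); apply: idealMl. Qed.

Lemma jacobson_ideal (A : comNzRingType) : is_ideal (@jacobson A).
Proof.
split=> [M [M_ideal _ _]|x y Jx Jy M M_max|a x Jx M M_max].
- exact: ideal0.
- case: (M_max) => M_ideal _ _; exact: (idealD M_ideal (Jx M M_max) (Jy M M_max)).
- case: (M_max) => M_ideal _ _; exact: (idealMl M_ideal a (Jx M M_max)).
Qed.

Lemma maximal_ideal_exists (A : comNzRingType) :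
  exists M : A -> Prop, is_maximal_ideal M.
Proof.
pose P (X : set A) := [/\ forall x y, X x -> X y -> X (x + y),
  forall a x, X x -> X (a * x) & ~ X 1].
have [|M [[MD MM M1] M_max]] := @Zorn_bigcup A P.
  move=> F FP F_total; split.
  - move=> x y [X FX Xx] [Y FY Yy].
    have [XY|YX] := F_total X Y FX FY.
      by exists Y => //; case: (FP Y FY) => + _ _; apply=> //; exact: XY.
    by exists X => //; case: (FP X FX) => + _ _; apply=> //; exact: YX.
  - by move=> a x [X FX Xx]; exists X => //; case: (FP X FX) => _ + _; apply.
  - by move=> [X FX X1]; case: (FP X FX) => _ _; apply.
(* The empty chain has an empty union, so 0 is not built into P; it is recovered
   by maximality, as adjoining 0 to M keeps it in P. *)
have M0 : M 0.
  apply: contrapT => nM0; apply: (M_max (fun x => x = 0 \/ M x)).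
    by split=> [x Mx|/(_ 0 (or_introl erefl))//]; right.
  split=> [x y [->|Mx] [->|My]|a x [->|Mx]|[/eqP|//]].
  - by left; rewrite addr0.
  - by right; rewrite add0r.
  - by right; rewrite addr0.
  - by right; apply: MD.
  - by left; rewrite mulr0.
  - by right; apply: MM.
  - by rewrite oner_eq0.
exists M; split=> // J [J0 JD JM] MJ.
have [J1|nJ1] := pselect (J 1); first by left=> x; rewrite -(mulr1 x); apply: JM.
right=> x; split=> [Jx|]; last exact: MJ.
apply: contrapT => nMx; apply: (M_max J); first by split=> [//|/(_ x Jx)].
by split.
Qed.

Lemma not_jacobson1 (A : comNzRingType) : ~ jacobson (1 : A).
Proof.
move=> J1; have [M M_max] := maximal_ideal_exists A.
by case: (M_max) => _ M_neq1 _; apply: M_neq1; exact: J1.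
Qed.

Section DeltaIdeal.
Variables (p : nat) (A : comNzRingType) (d : A -> A) (I : A -> Prop).
Hypotheses (d_delta : delta_structure p d) (I_ideal : is_ideal I).

Lemma delta_add_ideal a b : I a -> I (d a) -> I (d b) -> I (d (a + b)).
Proof.
move=> Ia Ida Idb; case: d_delta => _ _ dD _; rewrite dD.
apply: idealD => //; first exact: idealD.
apply: idealN => //; rewrite big_nat_cond.
apply: ideal_sum => // i /andP[/andP[i_gt0 _] _].
by apply: idealMr => //; apply: idealMl => //; apply: idealX.
Qed.

Lemma delta_mul_ideal a b : (0 < p)%N -> I p%:R -> I a -> I b -> I (d (a * b)).
Proof.
move=> p_gt0 Ip Ia Ib; case: d_delta => _ _ _ dM; rewrite dM.
apply: idealD => //; first apply: idealD => //; apply: idealMr => //.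
- exact: idealX.
- exact: idealX.
- exact: idealMr.
Qed.

Lemma delta_ideal_sq x : (0 < p)%N -> I p%:R -> ideal_sq I x -> I (d x).
Proof.
move=> p_gt0 Ip [n [a [b [Iab ->]]]].
elim: n a b Iab => [|n IHn] a b Iab.
  by case: d_delta => d0 _ _ _; rewrite big_ord0 d0; apply: ideal0.
have [Ia Ib] := Iab ord_max.
rewrite big_ord_recr /= addrC; apply: delta_add_ideal.
- exact: idealMr.
- exact: delta_mul_ideal.
- by apply: IHn => i; apply: Iab.
Qed.

End DeltaIdeal.

(* [(n^p - n)/p], written as the sum over [k < n] of the correction terms in
   the sum rule for [δ(k + 1)], so that [δ(n) = - delta_nat p n]. *)
Definition delta_nat (p n : nat) : nat :=
  \sum_(0 <= k < n) \sum_(1 <= i < p) 'C(p, i) %/ p * k ^ i.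

Lemma delta_natE (p n : nat) : prime p -> (p * delta_nat p n + n = n ^ p)%N.
Proof.
move=> p_prime; have p_gt0 := prime_gt0 p_prime.
elim: n => [|n IHn]; first by rewrite /delta_nat big_geq // muln0 exp0n.
have binom_inner : (n.+1 ^ p = 1 + \sum_(1 <= i < p) 'C(p, i) * n ^ i + n ^ p)%N.
  rewrite -addn1 addnC expnDn.
  rewrite -(big_mkord xpredT (fun i => 'C(p, i) * (1 ^ (p - i) * n ^ i)))%N.
  rewrite big_nat_recr //= big_ltn //= bin0 binn exp1n subnn !mul1n expn0.
  by congr (_ + _ + _)%N; apply: eq_big_nat => i _; rewrite exp1n mul1n.
have p_divides : (p * \sum_(1 <= i < p) 'C(p, i) %/ p * n ^ i
                  = \sum_(1 <= i < p) 'C(p, i) * n ^ i)%N.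
  rewrite big_distrr /=; apply: eq_big_nat => i /andP[i_gt0 i_ltp].
  by rewrite mulnA [(p * _)%N]mulnC divnK // prime_dvd_bin // i_gt0 i_ltp.
rewrite /delta_nat big_nat_recr //= -/(delta_nat p n) mulnDr p_divides binom_inner -IHn.
lia.
Qed.

Lemma delta_nat_self (p : nat) : prime p -> (delta_nat p p + 1 = p ^ p.-1)%N.
Proof.
move=> p_prime; have p_gt0 := prime_gt0 p_prime.
apply/eqP; rewrite -(eqn_pmul2l p_gt0) mulnDr muln1 delta_natE //.
by rewrite -expnS prednK.
Qed.

Section DeltaNat.
Variables (p : nat) (A : comNzRingType) (d : A -> A).
Hypothesis d_delta : delta_structure p d.

Lemma delta_natr n : d n%:R = - (delta_nat p n)%:R.
Proof.
case: d_delta => d0 d1 dD _.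
elim: n => [|n IHn]; first by rewrite d0 /delta_nat big_geq // oppr0.
rewrite -addn1 natrD dD IHn d1 addr0 /delta_nat addn1 big_nat_recr //= -/(delta_nat p n).
rewrite natrD opprD; congr (_ - _); rewrite natr_sum; apply: eq_bigr => i _.
by rewrite expr1n mulr1 natrM natrX.
Qed.

Lemma delta_p_add_exp : prime p -> d p%:R + p%:R ^+ p.-1 = 1.
Proof.
by move=> p_prime; rewrite delta_natr -natrX -delta_nat_self // natrD addKr.
Qed.

End DeltaNat.

Theorem lemma3p3 (p : nat) (A : comUnitRingType) (d : A -> A) :
  prime p -> Zp_algebra p A -> p_zariskian p A -> delta_structure p d ->
  (forall x : A, ideal_sq (@jacobson A) x -> jacobson (d x)) /\
  (forall x : A, distinguished d x -> ~ ideal_sq (@jacobson A) x) /\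
  (forall m : A -> Prop, local_with_max m -> m p%:R /\ ~ ideal_sq m p%:R).
Proof.
move=> p_prime _ p_jac d_delta; have p_gt0 := prime_gt0 p_prime.
have delta_jac x : ideal_sq (@jacobson A) x -> jacobson (d x).
  exact: delta_ideal_sq d_delta (jacobson_ideal A) x p_gt0 p_jac.
split=> //; split.
  move=> x dx_unit /delta_jac dx_jac; apply: not_jacobson1.
  exact: ideal1_unit (jacobson_ideal A) dx_jac dx_unit.
move=> m [m_max _]; have p_m : m p%:R := p_jac m m_max.
split=> // p_sq; case: (m_max) => m_ideal m_neq1 _; apply: m_neq1.
have pred_p_gt0 : (0 < p.-1)%N by have := prime_gt1 p_prime; lia.
rewrite -(delta_p_add_exp d_delta p_prime); apply: idealD => //.
- exact: delta_ideal_sq d_delta m_ideal _ p_gt0 p_m p_sq.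
- exact: idealX.
Qed.
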